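(* Let $K$ be a field of characteristic $p>0$, $(A,\circ)$ an associative commutative $K$-algebra and $D$ a derivation of $(A,\circ)$. For integers $0\le k\le l$ define a multiplication $\square=\square_{k,l}$ on $A$ by $$a\square b=D\big(D^{p^k-1}(a)\circ D^{p^l-1}(b)+D^{p^l-1}(a)\circ D^{p^k-1}(b)\big)\ \text{ if }k\neq l,\qquad a\square b=D\big(D^{p^k-1}(a)\circ D^{p^k-1}(b)\big)\ \text{ if }k=l.$$ (i) If $k=l$, or if $p=2$ and $l=k+1$, then $(A,\square)$ is Tortken. (ii) If $k\neq l$ and $p>2$, or if $p=2$ and $l-k>1$, then there exist an associative commutative algebra $(A,\circ)$ with a derivation $D$ such that $(A,\square)$ is not Tortken.
   Context: An algebra with multiplication $\star$ is Tortken if $(a\star b)\star(c\star d)-(a\star d)\star(c\star b)=(a,b,c)\star d-(a,d,c)\star b$ for all $a,b,c,d$, where $(a,b,c)=a\star(b\star c)-(a\star b)\star c$. $D^0$ is the identity map. *)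

From HB Require Import structures.
From mathcomp Require Import all_boot all_order all_algebra.
Set Implicit Arguments. Unset Strict Implicit. Unset Printing Implicit Defensive.
Import GRing.Theory.
Local Open Scope ring_scope.

Definition assoc_of {V : zmodType} (m : V -> V -> V) (a b c : V) : V :=
  m a (m b c) - m (m a b) c.

Definition tortken {V : zmodType} (m : V -> V -> V) : Prop :=
  forall a b c d : V,
    m (m a b) (m c d) - m (m a d) (m c b) =
    m (assoc_of m a b c) d - m (assoc_of m a d c) b.

(* (A, mul) is an associative commutative K-algebra (not necessarily unital):
   mul is K-bilinear (left linearity + commutativity), associative, commutative. *)
Definition comm_assoc_alg {K : fieldType} {A : lmodType K} (mul : A -> A -> A)
  : Prop :=
  (forall (c : K) (x y z : A), mul (c *: x + y) z = c *: mul x z + mul y z) /\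
  (forall x y : A, mul x y = mul y x) /\
  (forall x y z : A, mul x (mul y z) = mul (mul x y) z).

Definition derivation {K : fieldType} {A : lmodType K} (mul : A -> A -> A)
  (D : A -> A) : Prop :=
  (forall (c : K) (x y : A), D (c *: x + y) = c *: D x + D y) /\
  (forall x y : A, D (mul x y) = mul (D x) y + mul x (D y)).

Definition Dpow {A : Type} (D : A -> A) (n : nat) : A -> A := iter n D.

Definition square_kl {K : fieldType} {A : lmodType K} (mul : A -> A -> A)
  (D : A -> A) (p k l : nat) (a b : A) : A :=
  if k == l then
    D (mul (Dpow D (p ^ k).-1 a) (Dpow D (p ^ k).-1 b))
  else
    D (mul (Dpow D (p ^ k).-1 a) (Dpow D (p ^ l).-1 b)
       + mul (Dpow D (p ^ l).-1 a) (Dpow D (p ^ k).-1 b)).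

From HB Require Import structures.
From mathcomp Require Import all_boot all_order all_algebra.
From mathcomp Require Import ring mpoly.

(* (i) For k = l, a [] b = D (E a * E b) with E = D^(q-1), q = p^k; for p = 2
   and l = k + 1 the Leibniz rule for D^q gives a [] b = D^(q+1) (E a * E b).
   In both cases E composed with the outer operator is a power D^(p^n), which
   is a derivation in characteristic p, and any product H (E a * E b) with
   E o H a derivation is Tortken.
   (ii) On K[X_0, ..., X_3] take D = sum_i e^i X_i d/dX_i with e = X_0^p, a
   constant of D.  On eigenvectors of D with constant eigenvalues ("weights")
   s and t one has a [] b = phi(s, t) a b, where
   phi(s, t) s t = (s + t) (s^q t^Q + s^Q t^q), q = p^k, Q = p^l.  Hence the
   Tortken defect of four eigenvectors is a b c d times a polynomial in their
   weights, and since x |-> x^q and x |-> x^Q are additive this polynomial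
   factors explicitly for the weights 1, e, 1 + e, 2e (p odd) and 1, e, e^2,
   e^3 (p = 2).  With U = e^q and V = e^Q all factors are nonzero, except that
   for p = 2 the factor U^2 + V vanishes exactly when l = k + 1. *)

Set Implicit Arguments.
Unset Strict Implicit.
Unset Printing Implicit Defensive.

Import GRing.Theory.
Local Open Scope ring_scope.

Section NonunitalAlgebra.
Variables (K : fieldType) (A : lmodType K) (mul : A -> A -> A).
Hypothesis mulP : comm_assoc_alg mul.

Lemma mulDl x y z : mul (x + y) z = mul x z + mul y z.
Proof. by have := mulP.1 1 x y z; rewrite !scale1r. Qed.

Lemma mul0l z : mul 0 z = 0.
Proof. by apply: (addrI (mul 0 z)); rewrite -mulDl !addr0. Qed.

Lemma mulZl c x z : mul (c *: x) z = c *: mul x z.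
Proof. by have := mulP.1 c x 0 z; rewrite !addr0 mul0l addr0. Qed.

Lemma mulC x y : mul x y = mul y x.
Proof. exact: mulP.2.1. Qed.

Lemma mulA x y z : mul x (mul y z) = mul (mul x y) z.
Proof. exact: mulP.2.2. Qed.

Lemma mulDr x y z : mul z (x + y) = mul z x + mul z y.
Proof. by rewrite mulC mulDl !(mulC z). Qed.

Lemma mulZr c x z : mul z (c *: x) = c *: mul z x.
Proof. by rewrite mulC mulZl mulC. Qed.

(* The unitization K x A is indexed by the proof [mulP] so that its ring
   structure, which depends on [mulP], can be declared canonical. *)
Definition unitization of comm_assoc_alg mul : Type := (K * A)%type.
Local Notation U := (unitization mulP).

HB.instance Definition _ := GRing.Zmodule.on U.

Definition unit_mul (u v : U) : U :=
  (u.1 * v.1, u.1 *: v.2 + v.1 *: u.2 + mul u.2 v.2).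

Lemma unit_mulA : associative unit_mul.
Proof.
move=> [a x] [b y] [c z]; rewrite /unit_mul /=; congr pair; first by rewrite mulrA.
rewrite !(mulDl, mulDr, mulZl, mulZr, scalerDr, scalerA, mulA) (mulrC c a) (mulrC c b).
by rewrite !addrA [LHS](ACl (1*2*4*6*3*5*7)).
Qed.

Lemma unit_mulC : commutative unit_mul.
Proof.
move=> [a x] [b y]; rewrite /unit_mul /= mulrC mulC.
by congr (_, _); rewrite [_ *: y + _]addrC.
Qed.

Lemma unit_mul1 : left_id (1, 0) unit_mul.
Proof. by move=> [a x]; rewrite /unit_mul /= mul1r scale1r scaler0 mul0l !addr0. Qed.

Lemma unit_mulDl : left_distributive unit_mul +%R.
Proof.
move=> [a x] [b y] [c z]; rewrite /unit_mul /=; congr pair; first by rewrite mulrDl.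
by rewrite !(mulDl, scalerDl, scalerDr) !addrA [LHS](ACl (1*3*5*2*4*6)).
Qed.

HB.instance Definition _ :=
  GRing.Zmodule_isComPzRing.Build U unit_mulA unit_mulC unit_mul1 unit_mulDl.

Definition unit_inj (x : A) : U := (0, x).

Lemma unit_inj_inj : injective unit_inj.
Proof. by move=> x y []. Qed.

Lemma unit_injN x : unit_inj (- x) = - unit_inj x.
Proof. by rewrite /unit_inj; congr pair; rewrite oppr0. Qed.

Lemma unit_injD x y : unit_inj (x + y) = unit_inj x + unit_inj y.
Proof. by rewrite /unit_inj; congr pair; rewrite addr0. Qed.

Lemma unit_injM x y : unit_inj (mul x y) = unit_inj x * unit_inj y.
Proof. by rewrite /unit_inj /GRing.mul /= /unit_mul /= mul0r !scale0r !add0r. Qed.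

End NonunitalAlgebra.

Lemma eq_derivation (K : fieldType) (A : lmodType K) (mul : A -> A -> A)
    (D E : A -> A) :
  D =1 E -> derivation mul D -> derivation mul E.
Proof. by move=> eDE [linD LeibD]; split=> *; rewrite -!eDE ?linD ?LeibD. Qed.

Section Derivations.
Variables (K : fieldType) (A : lmodType K) (mul : A -> A -> A).

Section OneDerivation.
Variable D : A -> A.
Hypothesis derD : derivation mul D.

Lemma derivationD x y : D (x + y) = D x + D y.
Proof. by rewrite -[x]scale1r derD.1 !scale1r. Qed.

Lemma derivationB x y : D (x - y) = D x - D y.
Proof. by rewrite -scaleN1r addrC derD.1 scaleN1r addrC. Qed.

Lemma derivation_iterB n x y : iter n D (x - y) = iter n D x - iter n D y.
Proof. by elim: n => //= n ->; rewrite derivationB. Qed.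

Lemma derivation_iter_linear n c x y :
  iter n D (c *: x + y) = c *: iter n D x + iter n D y.
Proof. by elim: n => //= n ->; rewrite derD.1. Qed.

Lemma iter_derivation_Leibniz n x y :
  iter n D (mul x y) =
  \sum_(i < n.+1) mul (iter i D x) (iter (n - i) D y) *+ 'C(n, i).
Proof.
have D0 : D 0 = 0 by have := derivationB 0 0; rewrite !subrr.
have DMn z m : D (z *+ m) = D z *+ m.
  by rewrite -!scaler_nat -[_ *: z]addr0 derD.1 D0 addr0.
elim: n => [|n IH]; first by rewrite big_ord1.
rewrite iterS IH (big_morph D derivationD D0).
under eq_bigr do rewrite DMn derD.2 mulrnDl -!iterS.
rewrite big_split /= [RHS]big_ord_recl /= bin0 mulr1n.
under [in RHS]eq_bigr do rewrite /bump /= add0n add1n binS addnC mulrnDr subSS.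
rewrite big_split /= addrCA; congr (_ + _).
rewrite big_ord_recl big_ord_recr /= bin0 bin_small // mulr0n addr0 subn0.
congr (_ + _); apply: eq_bigr => i _.
by rewrite /bump /= add0n add1n -[D (iter _ D y)]iterS subnSK.
Qed.

End OneDerivation.

Lemma derivation_iter_prime p D :
  p \in [pchar K] -> derivation mul D -> derivation mul (iter p D).
Proof.
move=> pK derD; split=> [|x y]; first exact: derivation_iter_linear.
have pA (z : A) : z *+ p = 0 by rewrite -(scaler_nat (R := K)) (pcharf0 pK) scale0r.
have p_prime := pcharf_prime pK.
rewrite iter_derivation_Leibniz //; case: p pK pA p_prime => // n _ pA p_prime.
rewrite big_ord_recl big_ord_recr big1 => [|i _] /=.
  by rewrite add0r bin0 binn !mulr1n /bump /= add1n subnn addrC.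
rewrite /bump /= add1n.
have /dvdnP[m ->] : (n.+1 %| 'C(n.+1, i.+1))%N.
  by rewrite prime_dvd_bin //= ltnS ltn_ord.
by rewrite mulnC mulrnA pA mul0rn.
Qed.

Lemma derivation_iter_pchar p k D :
  p \in [pchar K] -> derivation mul D -> derivation mul (iter (p ^ k) D).
Proof.
move=> pK derD; apply: (eq_derivation (fun x => esym (iterX _ _ _ x))).
by elim: k => //= k IHk; exact: derivation_iter_prime.
Qed.

End Derivations.

Lemma eq_tortken (V : zmodType) (m1 m2 : V -> V -> V) :
  m1 =2 m2 -> tortken m1 -> tortken m2.
Proof. by move=> e12 t1 a b c d; have := t1 a b c d; rewrite /assoc_of !e12. Qed.

Section TortkenFromDerivation.
Variables (K : fieldType) (A : lmodType K) (mul : A -> A -> A).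
Hypothesis mulP : comm_assoc_alg mul.

(* Both sides of the Tortken identity become the same expression in the values
   of the derivation [F], which [ring] checks in the unitization. *)
Lemma tortken_of_derivation (H E F : A -> A) :
  {morph H : x y / x - y} -> {morph E : x y / x - y} ->
  (forall x, E (H x) = F x) -> derivation mul F ->
  tortken (fun a b => H (mul (E a) (E b))).
Proof.
move=> HB EB EH derF a b c d; rewrite /assoc_of !EB !EH -!HB; congr H.
rewrite !(derivationB derF, derivationD derF, derF.2).
apply: (@unit_inj_inj _ _ _ mulP).
by rewrite !(unit_injN, unit_injD, unit_injM); ring.
Qed.

Variables (p : nat) (D : A -> A).
Hypotheses (pK : p \in [pchar K]) (derD : derivation mul D).

Lemma tortken_square_diag k : tortken (square_kl mul D p k k).
Proof.
have q_gt0 : (0 < p ^ k)%N by rewrite expn_gt0 prime_gt0 ?(pcharf_prime pK).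
apply: (@eq_tortken _ (fun a b => D (mul (iter (p ^ k).-1 D a) (iter (p ^ k).-1 D b)))).
  by move=> a b; rewrite /square_kl eqxx.
apply: (tortken_of_derivation (F := iter (p ^ k) D)).
- exact: derivationB derD.
- exact: derivation_iterB derD _.
- by move=> x; rewrite -iterSr prednK.
- exact: derivation_iter_pchar.
Qed.

Lemma tortken_square_char2 k : p = 2%N -> tortken (square_kl mul D p k k.+1).
Proof.
move=> p2; set q := (p ^ k)%N.
have q_gt0 : (0 < q)%N by rewrite expn_gt0 p2.
have pSk : (p ^ k.+1 = q + q)%N by rewrite expnS -/q p2 mul2n addnn.
apply: (@eq_tortken _ (fun a b => iter q.+1 D (mul (iter q.-1 D a) (iter q.-1 D b)))).
  have pSk1 : ((p ^ k.+1).-1 = q + q.-1)%N by rewrite pSk -!subn1 addnBA.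
  have derDq : derivation mul (iter q D) := derivation_iter_pchar k pK derD.
  move=> a b; rewrite /square_kl ltn_eqF // /Dpow pSk1 -/q !iterD.
  by rewrite iterS derDq.2 addrC.
apply: (tortken_of_derivation (F := iter (p ^ k.+1) D)).
- exact: derivation_iterB derD _.
- exact: derivation_iterB derD _.
- by move=> x; rewrite -iterD pSk addnS -addSn prednK.
- exact: derivation_iter_pchar.
Qed.

End TortkenFromDerivation.

Definition tortken_defect (V : zmodType) (m : V -> V -> V) (a b c d : V) : V :=
  m (m a b) (m c d) - m (m a d) (m c b) -
  (m (assoc_of m a b c) d - m (assoc_of m a d c) b).

Lemma tortken_defect0 (V : zmodType) (m : V -> V -> V) a b c d :
  tortken m -> tortken_defect m a b c d = 0.
Proof. by move=> tm; rewrite /tortken_defect tm subrr. Qed.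

(* The factor by which [tortken_defect m a b c d] multiplies [a * b * c * d]
   when [m] multiplies elements of weights [s] and [t] by [f s t]. *)
Definition tortken_coef (R : comPzRingType) (f : R -> R -> R) (X Y Z W : R) : R :=
  f (X + Y) (Z + W) * f X Y * f Z W - f (X + W) (Z + Y) * f X W * f Z Y
  - f (X + (Y + Z)) W * (f X (Y + Z) * f Y Z - f (X + Y) Z * f X Y)
  + f (X + (W + Z)) Y * (f X (W + Z) * f W Z - f (X + W) Z * f X W).

Section GradedMultiplication.
Variables (R : comPzRingType) (weight : R -> R -> Prop) (m f : R -> R -> R).
Hypothesis weightB : forall a b l, weight a l -> weight b l -> weight (a - b) l.
Hypothesis m_weight : forall a b l1 l2, weight a l1 -> weight b l2 ->
  m a b = f l1 l2 * (a * b) /\ weight (m a b) (l1 + l2).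

Lemma tortken_defect_weight a b c d X Y Z W :
  weight a X -> weight b Y -> weight c Z -> weight d W ->
  tortken_defect m a b c d = tortken_coef f X Y Z W * (a * b * c * d).
Proof.
move=> wa wb wc wd.
have [eab wab] := m_weight wa wb; have [ecd wcd] := m_weight wc wd.
have [ead wad] := m_weight wa wd; have [ecb wcb] := m_weight wc wb.
have [ebc wbc] := m_weight wb wc; have [edc wdc] := m_weight wd wc.
have [ea_bc wa_bc] := m_weight wa wbc; have [eab_c wab_c] := m_weight wab wc.
have [ea_dc wa_dc] := m_weight wa wdc; have [ead_c wad_c] := m_weight wad wc.
rewrite -addrA in wab_c; rewrite -addrA in wad_c.
have [eabc_d _] := m_weight (weightB wa_bc wab_c) wd.
have [eadc_b _] := m_weight (weightB wa_dc wad_c) wb.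
have [eab_cd _] := m_weight wab wcd; have [ead_cb _] := m_weight wad wcb.
rewrite /tortken_defect /assoc_of eabc_d eadc_b eab_cd ead_cb.
rewrite ea_bc eab_c ea_dc ead_c eab ecd ead ecb ebc edc /tortken_coef; ring.
Qed.

End GradedMultiplication.

(* Each of the six products of three values of [f] in [tortken_coef f], times
   [X * Y * Z * W], is [X + Y + Z + W] times the matching product of values of
   [g] up to a product of two of the sums assumed nonzero. *)
Lemma tortken_coef_cancel (R : idomainType) (f g : R -> R -> R) (X Y Z W : R) :
  (forall s t, f s t * (s * t) = (s + t) * g s t) ->
  X + Y != 0 -> Z + W != 0 -> X + W != 0 -> Z + Y != 0 -> Y + Z != 0 ->
  X + (Y + Z) != 0 -> W + Z != 0 -> X + (W + Z) != 0 ->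
  tortken_coef f X Y Z W * (X * Y * Z * W) =
  (X + Y + Z + W) * tortken_coef g X Y Z W.
Proof.
move=> fg nXY nZW nXW nZY nYZ nXYZ nWZ nXWZ.
pose S := X + Y + Z + W; pose P := X * Y * Z * W.
have f3 s1 t1 s2 t2 s3 t3 c : c != 0 ->
    s1 * t1 * (s2 * t2) * (s3 * t3) = P * c ->
    (s1 + t1) * (s2 + t2) * (s3 + t3) = c * S ->
    f s1 t1 * f s2 t2 * f s3 t3 * P = S * (g s1 t1 * g s2 t2 * g s3 t3).
  move=> c_neq0 eP eS; apply: (mulIf c_neq0).
  transitivity (f s1 t1 * (s1 * t1) * (f s2 t2 * (s2 * t2)) * (f s3 t3 * (s3 * t3))).
    by rewrite -mulrA -eP; ring.
  rewrite !fg; transitivity ((s1 + t1) * (s2 + t2) * (s3 + t3) *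
                              (g s1 t1 * g s2 t2 * g s3 t3)); first by ring.
  by rewrite eS; ring.
have T1 := f3 (X + Y) (Z + W) X Y Z W _ (mulf_neq0 nXY nZW)
  ltac:(by rewrite /P; ring) ltac:(by rewrite /S; ring).
have T2 := f3 (X + W) (Z + Y) X W Z Y _ (mulf_neq0 nXW nZY)
  ltac:(by rewrite /P; ring) ltac:(by rewrite /S; ring).
have T3 := f3 (X + (Y + Z)) W X (Y + Z) Y Z _ (mulf_neq0 nYZ nXYZ)
  ltac:(by rewrite /P; ring) ltac:(by rewrite /S; ring).
have T4 := f3 (X + (Y + Z)) W (X + Y) Z X Y _ (mulf_neq0 nXY nXYZ)
  ltac:(by rewrite /P; ring) ltac:(by rewrite /S; ring).
have T5 := f3 (X + (W + Z)) Y X (W + Z) W Z _ (mulf_neq0 nWZ nXWZ)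
  ltac:(by rewrite /P; ring) ltac:(by rewrite /S; ring).
have T6 := f3 (X + (W + Z)) Y (X + W) Z X W _ (mulf_neq0 nXW nXWZ)
  ltac:(by rewrite /P; ring) ltac:(by rewrite /S; ring).
transitivity (f (X + Y) (Z + W) * f X Y * f Z W * P
  - f (X + W) (Z + Y) * f X W * f Z Y * P
  - f (X + (Y + Z)) W * f X (Y + Z) * f Y Z * P
  + f (X + (Y + Z)) W * f (X + Y) Z * f X Y * P
  + f (X + (W + Z)) Y * f X (W + Z) * f W Z * P
  - f (X + (W + Z)) Y * f (X + W) Z * f X W * P).
  by rewrite /tortken_coef /P; ring.
by rewrite T1 T2 T3 T4 T5 T6 /tortken_coef /S; ring.
Qed.

Definition of_weight (R : comPzRingType) (D : R -> R) (a l : R) : Prop :=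
  D l = 0 /\ D a = l * a.

Definition square_coef (R : comPzRingType) (q Q : nat) (s t : R) : R :=
  (s + t) * (s ^+ q.-1 * t ^+ Q.-1 + s ^+ Q.-1 * t ^+ q.-1).

Section Weights.
Variables (K : fieldType) (R : comAlgType K) (D : R -> R).
Hypothesis derD : derivation *%R D.

Lemma derivation1 : D 1 = 0.
Proof.
have D11 := derD.2 1 1; rewrite !mul1r mulr1 in D11.
by apply: (addrI (D 1)); rewrite addr0 -D11.
Qed.

Lemma derivation_constD x y : D x = 0 -> D y = 0 -> D (x + y) = 0.
Proof. by rewrite (derivationD derD) => -> ->; rewrite addr0. Qed.

Lemma derivation_constM x y : D x = 0 -> D y = 0 -> D (x * y) = 0.
Proof. by rewrite derD.2 => -> ->; rewrite mul0r mulr0 addr0. Qed.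

Lemma derivation_constX x n : D x = 0 -> D (x ^+ n) = 0.
Proof.
move=> Dx0; elim: n => [|n IHn]; first exact: derivation1.
by rewrite exprS derivation_constM.
Qed.

Lemma of_weightM a b l1 l2 :
  of_weight D a l1 -> of_weight D b l2 -> of_weight D (a * b) (l1 + l2).
Proof.
move=> [Dl1 Da] [Dl2 Db]; split; first exact: derivation_constD.
by rewrite derD.2 Da Db; ring.
Qed.

Lemma of_weightB a b l : of_weight D a l -> of_weight D b l -> of_weight D (a - b) l.
Proof. by move=> [Dl Da] [_ Db]; split; rewrite // (derivationB derD) Da Db mulrBr. Qed.

Lemma of_weight_scale c a l : D c = 0 -> of_weight D a l -> of_weight D (c * a) l.
Proof. by move=> Dc [Dl Da]; split; rewrite // derD.2 Dc Da mul0r add0r mulrCA. Qed.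

Lemma iter_of_weight a l n : of_weight D a l -> iter n D a = l ^+ n * a.
Proof.
move=> [Dl Da]; elim: n => [|n IHn] /=; first by rewrite mul1r.
by rewrite IHn derD.2 derivation_constX // mul0r add0r Da exprS mulrCA mulrA.
Qed.

Variables (p k l : nat).
Hypothesis neq_kl : k != l.

Lemma square_kl_weight a b l1 l2 :
  of_weight D a l1 -> of_weight D b l2 ->
  square_kl *%R D p k l a b = square_coef (p ^ k) (p ^ l) l1 l2 * (a * b) /\
  of_weight D (square_kl *%R D p k l a b) (l1 + l2).
Proof.
move=> wa wb; have [Dl1 _] := wa; have [Dl2 _] := wb.
set c := l1 ^+ (p ^ k).-1 * l2 ^+ (p ^ l).-1 + l1 ^+ (p ^ l).-1 * l2 ^+ (p ^ k).-1.
have Dc : D c = 0 by rewrite !(derivation_constD, derivation_constM, derivation_constX).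
have wab := of_weightM wa wb.
have -> : square_kl *%R D p k l a b = square_coef (p ^ k) (p ^ l) l1 l2 * (a * b).
  rewrite /square_kl (negPf neq_kl) /Dpow !(iter_of_weight _ wa, iter_of_weight _ wb).
  have -> : forall e f g h : R,
      e * a * (f * b) + g * a * (h * b) = (e * f + g * h) * (a * b).
    by move=> e f g h; ring.
  by rewrite (of_weight_scale Dc wab).2 /square_coef -/c -[RHS]mulrA.
split=> //; apply: (of_weight_scale _ wab).
by rewrite /square_coef -/c; apply: derivation_constM => //; exact: derivation_constD.
Qed.

Lemma tortken_defect_square a b c d X Y Z W :
  of_weight D a X -> of_weight D b Y -> of_weight D c Z -> of_weight D d W ->
  tortken_defect (square_kl *%R D p k l) a b c d =
  tortken_coef (square_coef (p ^ k) (p ^ l)) X Y Z W * (a * b * c * d).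
Proof.
apply: tortken_defect_weight => [? ? ?|? ? ? ?]; first exact: of_weightB.
exact: square_kl_weight.
Qed.

End Weights.

Definition power_form (R : comPzRingType) (q Q : nat) (s t : R) : R :=
  s ^+ q * t ^+ Q + s ^+ Q * t ^+ q.

Lemma square_coef_mul (R : comPzRingType) (q Q : nat) (s t : R) :
  (0 < q)%N -> (0 < Q)%N ->
  square_coef q Q s t * (s * t) = (s + t) * power_form q Q s t.
Proof.
case: q Q => [|q] [|Q] // _ _.
by rewrite /square_coef /power_form /= !exprS; ring.
Qed.

(* For additive [f] and [g] (the Frobenius powers below) the form
   [f s * g t + g s * f t] is biadditive, so its [tortken_coef] on the weights
   of the counterexamples only involves [f e] and [g e]. *)
Section BiadditiveCoef.
Variables (R : comPzRingType) (f g : R -> R).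
Hypotheses (fD : {morph f : x y / x + y}) (gD : {morph g : x y / x + y})
           (f1 : f 1 = 1) (g1 : g 1 = 1).
Let form s t := f s * g t + g s * f t.

Lemma tortken_coef_odd e :
  tortken_coef form 1 e (1 + e) (e + e) = - 4%:R * f e * g e * (f e - g e) ^+ 2.
Proof. by rewrite /tortken_coef /form !(fD, gD) f1 g1; ring. Qed.

Hypotheses (fM : {morph f : x y / x * y}) (gM : {morph g : x y / x * y}).

Lemma tortken_coef_char2 e :
  tortken_coef form 1 e (e ^+ 2) (e ^+ 3) =
  - (f e * g e * (f e - g e) ^+ 2 * (f e + g e) *
     ((f e ^+ 2 + g e) * (f e + g e ^+ 2) * (f e + 1) * (g e + 1) +
      2%:R * (f e + g e) * (f e ^+ 2 + g e ^+ 2))).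
Proof.
by rewrite /tortken_coef /form [e ^+ 3]exprS expr2 !(fD, gD, fM, gM) f1 g1; ring.
Qed.

End BiadditiveCoef.

Lemma comm_assoc_alg_mulr (K : fieldType) (R : comAlgType K) :
  comm_assoc_alg ( *%R : R -> R -> R).
Proof.
split=> [c x y z|]; first by rewrite mulrDl scalerAl.
by split; [exact: mulrC | exact: mulrA].
Qed.

Section Counterexample.
Variables (K : fieldType) (p : nat).
Hypothesis pK : p \in [pchar K].
Local Notation A := {mpoly K[4]}.

Let p_gt0 : (0 < p)%N := prime_gt0 (pcharf_prime pK).

Lemma pchar_mpoly : p \in [pchar A].
Proof. exact: (rmorph_pchar (@mpolyC 4 K) pK). Qed.

Lemma frobenius_powD n : {morph (fun x : A => x ^+ (p ^ n)) : x y / x + y}.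
Proof.
move=> x y; apply: exprDn_pchar; rewrite (eq_pnat _ (pcharf_eq pchar_mpoly)).
by rewrite pnatX pnat_id ?(pcharf_prime pK).
Qed.

(* The constant e of the construction: d/dX_0 (X_0^p) = p X_0^(p-1) = 0. *)
Definition Xp : A := 'X_0 ^+ p.

Definition weighted_euler (f : A) : A := \sum_(i < 4) Xp ^+ i * 'X_i * f^`M(i).

Lemma mderivXU (i j : 'I_4) : ('X_j : A)^`M(i) = (j == i)%:R.
Proof.
rewrite mderivX mnm1E; case: eqP => [->|_]; last by rewrite scale0r.
have -> : (U_(i) - U_(i))%MM = 0%MM by apply/mnmP => t; rewrite mnmBE subnn mnm0E.
by rewrite mpolyX0 scale1r.
Qed.

Lemma mderivXp (i : 'I_4) : Xp^`M(i) = 0.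
Proof. by rewrite /Xp mpolyXn mderivX mulmnE natrM (pcharf0 pK) mulr0 scale0r. Qed.

Lemma derivation_weighted_euler : derivation *%R weighted_euler.
Proof.
split=> [c x y|x y]; rewrite /weighted_euler.
  rewrite scaler_sumr -big_split /=; apply: eq_bigr => i _.
  by rewrite mderivD mderivZ mulrDr scalerAr.
rewrite mulr_suml mulr_sumr -big_split /=; apply: eq_bigr => i _.
by rewrite mderivM; ring.
Qed.

Lemma weighted_euler_Xp : weighted_euler Xp = 0.
Proof. by rewrite /weighted_euler big1 // => i _; rewrite mderivXp mulr0. Qed.

Lemma of_weight_X (i : 'I_4) : of_weight weighted_euler 'X_i (Xp ^+ i).
Proof.
split; first exact: derivation_constX derivation_weighted_euler _ _ weighted_euler_Xp.
rewrite /weighted_euler (bigD1 i) //= mderivXU eqxx mulr1 big1 ?addr0 //.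
by move=> j /negPf neq_ji; rewrite mderivXU eq_sym neq_ji mulr0.
Qed.

Local Notation ev0 := (meval (fun _ : 'I_4 => (0 : K))).

Lemma neq0_of_ev0 (f : A) : ev0 f != 0 -> f != 0.
Proof. by apply: contra => /eqP ->; rewrite rmorph0. Qed.

Lemma ev0_Xp : ev0 Xp = 0.
Proof. by rewrite rmorphXn /= mevalXU expr0n (gtn_eqF p_gt0). Qed.

Lemma ev0_XpX n : ev0 (Xp ^+ n) = (n == 0)%:R.
Proof. by rewrite rmorphXn /= ev0_Xp expr0n. Qed.

Lemma X_neq0 (i : 'I_4) : ('X_i : A) != 0.
Proof.
apply: contra (@oner_neq0 K) => /eqP Xi0.
by have := mevalXU (fun _ => (1 : K)) i; rewrite Xi0 rmorph0 => <-.
Qed.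

Lemma Xp_neq0 : Xp != 0.
Proof. exact: expf_neq0 (X_neq0 0). Qed.

Lemma Xp_lowest_neq0 m n (c : A) : (m < n)%N -> Xp ^+ m + c * Xp ^+ n != 0.
Proof.
move=> lt_mn; rewrite -(subnKC (ltnW lt_mn)) exprD mulrCA -[X in X + _]mulr1 -mulrDr.
apply: mulf_neq0; first exact: expf_neq0 Xp_neq0.
apply: neq0_of_ev0; rewrite rmorphD rmorphM rmorphXn /= ev0_Xp.
by rewrite expr0n subn_eq0 leqNgt lt_mn mulr0 addr0 rmorph1 oner_neq0.
Qed.

Lemma Xp_binom_neq0 m n : m != n -> Xp ^+ m + Xp ^+ n != 0.
Proof.
rewrite neq_ltn => /orP[] lt; [|rewrite addrC];
  by rewrite -[X in _ + X]mul1r Xp_lowest_neq0.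
Qed.

Lemma Xp_sub_neq0 m n : (m < n)%N -> Xp ^+ m - Xp ^+ n != 0.
Proof. by move=> lt_mn; rewrite -mulN1r Xp_lowest_neq0. Qed.

Lemma Xp_add1_neq0 n : (0 < n)%N -> Xp ^+ n + 1 != 0.
Proof.
move=> n_gt0; apply: neq0_of_ev0.
by rewrite rmorphD rmorph1 /= ev0_XpX eqn0Ngt n_gt0 add0r oner_neq0.
Qed.

Lemma not_tortken_of_weights k l a b c d X Y Z W : k != l ->
  of_weight weighted_euler a X -> of_weight weighted_euler b Y ->
  of_weight weighted_euler c Z -> of_weight weighted_euler d W ->
  a * b * c * d != 0 ->
  X + Y != 0 -> Z + W != 0 -> X + W != 0 -> Z + Y != 0 -> Y + Z != 0 ->
  X + (Y + Z) != 0 -> W + Z != 0 -> X + (W + Z) != 0 ->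
  (X + Y + Z + W) * tortken_coef (power_form (p ^ k) (p ^ l)) X Y Z W != 0 ->
  ~ tortken (square_kl *%R weighted_euler p k l).
Proof.
move=> neq_kl wa wb wc wd abcd_neq0 nXY nZW nXW nZY nYZ nXYZ nWZ nXWZ.
have coef_mul (s t : A) : square_coef (p ^ k) (p ^ l) s t * (s * t) =
                          (s + t) * power_form (p ^ k) (p ^ l) s t.
  by rewrite square_coef_mul ?expn_gt0 ?p_gt0.
rewrite -(tortken_coef_cancel coef_mul) // mulf_eq0 negb_or => /andP[coef_neq0 _].
move/(tortken_defect0 a b c d).
rewrite (tortken_defect_square derivation_weighted_euler p neq_kl wa wb wc wd).
by apply/eqP; rewrite mulf_neq0.
Qed.

Lemma tortken_power_coef_odd_neq0 k l : (k < l)%N -> (2%:R : K) != 0 ->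
  (1 + Xp + (1 + Xp) + (Xp + Xp)) *
  tortken_coef (power_form (p ^ k) (p ^ l)) 1 Xp (1 + Xp) (Xp + Xp) != 0.
Proof.
move=> lt_kl two_neq0.
have p_gt1 : (1 < p)%N := prime_gt1 (pcharf_prime pK).
rewrite (tortken_coef_odd (frobenius_powD k) (frobenius_powD l) (expr1n _ _)
           (expr1n _ _)) /= mulf_neq0 //.
  by apply: neq0_of_ev0; rewrite !(rmorphD, rmorph1) /= ev0_Xp !(addr0, add0r).
rewrite !mulf_neq0 ?expf_neq0 ?X_neq0 ?Xp_sub_neq0 ?ltn_exp2l //.
apply: neq0_of_ev0; rewrite rmorphN rmorph_nat oppr_eq0.
by rewrite (natrM _ 2 2) mulf_neq0.
Qed.

Lemma tortken_power_coef_char2_neq0 k l : p = 2%N -> (k.+1 < l)%N ->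
  (1 + Xp + Xp ^+ 2 + Xp ^+ 3) *
  tortken_coef (power_form (p ^ k) (p ^ l)) 1 Xp (Xp ^+ 2) (Xp ^+ 3) != 0.
Proof.
move=> p2 ltSkl.
have frobM n : {morph (fun x : A => x ^+ (p ^ n)) : x y / x * y}.
  by move=> x y; exact: exprMn.
rewrite (tortken_coef_char2 (frobenius_powD k) (frobenius_powD l) (expr1n _ _)
           (expr1n _ _) (frobM k) (frobM l)) /=.
have two0 : (2%:R : A) = 0 by have := pcharf0 pchar_mpoly; rewrite p2.
rewrite two0 !mul0r addr0 mulf_neq0 ?oppr_eq0 //.
  apply: neq0_of_ev0.
  by rewrite !(rmorphD, rmorph1) /= !ev0_XpX ev0_Xp /= !addr0 oner_neq0.
have lt_kl : (p ^ k < p ^ l)%N by rewrite ltn_exp2l ?p2 // ltnW.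
have lt_2kl : (p ^ k * 2 < p ^ l)%N by rewrite p2 -expnSr ltn_exp2l.
have lt_kl2 : (p ^ k < p ^ l * 2)%N by rewrite (leq_trans lt_kl) // leq_pmulr.
rewrite -!(exprM Xp) !mulf_neq0 ?expf_neq0 ?X_neq0 ?Xp_sub_neq0 ?Xp_binom_neq0
  ?Xp_add1_neq0 ?expn_gt0 ?p_gt0 //.
all: by rewrite neq_ltn ?lt_kl ?lt_2kl ?lt_kl2.
Qed.

Lemma not_tortken_square_odd k l : (k < l)%N -> (2 < p)%N ->
  ~ tortken (square_kl *%R weighted_euler p k l).
Proof.
move=> lt_kl p_gt2.
have two_neq0 : (2%:R : K) != 0.
  apply: contraTneq p_gt2 => two0.
  have : 2 \in [pchar K] by rewrite inE /= two0 eqxx.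
  by rewrite (pcharf_eq pK) inE => /eqP <-.
have w0 : of_weight weighted_euler 'X_0 1 by rewrite -(expr0 Xp); exact: of_weight_X 0.
have w1 : of_weight weighted_euler 'X_1 Xp by rewrite -[Xp]expr1; exact: of_weight_X 1.
have w01 := of_weightM derivation_weighted_euler w0 w1.
have w11 := of_weightM derivation_weighted_euler w1 w1.
apply: (not_tortken_of_weights (negbT (ltn_eqF lt_kl)) w0 w1 w01 w11);
  last exact: tortken_power_coef_odd_neq0.
  by rewrite !mulf_neq0 ?X_neq0.
all: apply: neq0_of_ev0.
all: by rewrite !(rmorphD, rmorph1) /= ev0_Xp !(addr0, add0r) ?oner_neq0.
Qed.

Lemma not_tortken_square_char2 k l : p = 2%N -> (1 < l - k)%N ->
  ~ tortken (square_kl *%R weighted_euler p k l).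
Proof.
move=> p2; rewrite ltn_subRL addn1 => ltSkl.
have w0 : of_weight weighted_euler 'X_0 1 by rewrite -(expr0 Xp); exact: of_weight_X 0.
have w1 : of_weight weighted_euler 'X_1 Xp by rewrite -[Xp]expr1; exact: of_weight_X 1.
have w2 : of_weight weighted_euler 'X_2 (Xp ^+ 2) := of_weight_X 2.
have w3 : of_weight weighted_euler 'X_3 (Xp ^+ 3) := of_weight_X 3.
apply: (not_tortken_of_weights (negbT (ltn_eqF (ltnW ltSkl))) w0 w1 w2 w3).
- by rewrite !mulf_neq0 ?X_neq0.
- by apply: neq0_of_ev0; rewrite rmorphD rmorph1 /= ev0_Xp addr0 oner_neq0.
- by rewrite Xp_binom_neq0.
- by apply: neq0_of_ev0; rewrite rmorphD rmorph1 /= ev0_XpX addr0 oner_neq0.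
- by rewrite -[Xp in _ + Xp]expr1 Xp_binom_neq0.
- by rewrite -[Xp in Xp + _]expr1 Xp_binom_neq0.
- by apply: neq0_of_ev0; rewrite !rmorphD rmorph1 /= ev0_XpX ev0_Xp !addr0 oner_neq0.
- by rewrite Xp_binom_neq0.
- by apply: neq0_of_ev0; rewrite !rmorphD rmorph1 /= !ev0_XpX !addr0 oner_neq0.
exact: tortken_power_coef_char2_neq0.
Qed.

End Counterexample.

Theorem mainTheorem18 (K : fieldType) (p : nat) (hp : p \in [pchar K])
    (k l : nat) (hkl : (k <= l)%N) :
  ((k = l \/ (p = 2%N /\ l = k.+1)) ->
     forall (A : lmodType K) (mul : A -> A -> A) (D : A -> A),
       comm_assoc_alg mul -> derivation mul D ->
       tortken (square_kl mul D p k l))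
  /\
  (((k <> l /\ (2 < p)%N) \/ (p = 2%N /\ (1 < l - k)%N)) ->
     exists (A : lmodType K) (mul : A -> A -> A) (D : A -> A),
       comm_assoc_alg mul /\ derivation mul D /\
       ~ tortken (square_kl mul D p k l)).
Proof.
split=> [[<-|[p2 ->]] A mul D mulP derD|cases].
- exact: tortken_square_diag.
- exact: tortken_square_char2.
exists {mpoly K[4]}, *%R, (@weighted_euler K p).
split; first exact: comm_assoc_alg_mulr.
split; first exact: derivation_weighted_euler.
case: cases => [[neq_kl p_gt2]|[p2 lt1_lk]]; first last.
  exact: not_tortken_square_char2.
by apply: not_tortken_square_odd; rewrite // ltn_neqAle hkl andbT; apply/eqP.
Qed.
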